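(* For any $4$-regular graph $G$ on $n$ vertices, where $n=20$ or $n=21$, we have $\mathcal{E}(G)<2(n-1)$.
   Context: All graphs are finite, simple and undirected. The energy $\mathcal{E}(G)$ of a graph $G$ is the sum of the absolute values of the eigenvalues of its adjacency matrix. *)

From HB Require Import structures.
From mathcomp Require Import all_boot all_order all_algebra all_field.
Set Implicit Arguments. Unset Strict Implicit. Unset Printing Implicit Defensive.
Import Order.TTheory GRing.Theory Num.Theory.
Local Open Scope ring_scope.

Definition simple_graph (n : nat) (e : rel 'I_n) : Prop :=
  symmetric e /\ irreflexive e.

Definition regular (n k : nat) (e : rel 'I_n) : Prop :=
  forall v : 'I_n, #|[set u | e v u]| = k.

Definition adjmx (n : nat) (e : rel 'I_n) : 'M[algC]_n :=
  \matrix_(i, j) (e i j)%:R.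

(* The eigenvalues (with algebraic multiplicity) of a square matrix: the
   roots of its characteristic polynomial, which splits over algC. *)
Definition eigenvalues (n : nat) (A : 'M[algC]_n) : seq algC :=
  sval (closed_field_poly_normal (char_poly A)).

Definition energy (n : nat) (e : rel 'I_n) : algC :=
  \sum_(z <- eigenvalues (adjmx e)) `|z|.

(* The all-ones vector gives the eigenvalue 4; let x_1, ..., x_(n-1) be the
   other eigenvalues. Counting closed walks of length 2 and 4 gives
   sum x_i^2 = 4n - 16 and sum x_i^4 >= 28n - 256: the codegrees c(v, w) of a
   vertex v sum to 16 with c(v, v) = 4, so sum_w c(v, w)^2 >= 16 + 12.
   Put M = max |x_i| and fix t > 0. The termwise bounds (|x| - t)^2 >= 0 and
   (x^2 - t^2)^2 <= (M + t)^2 (|x| - t)^2 bound sum (|x_i| - t)^2 from below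
   by (M - t)^2 and by (sum x_i^4 - 2t^2 sum x_i^2 + (n - 1)t^4) / (M + t)^2,
   while sum |x_i| >= 2n - 6 would bound it from above; for t = 17/10 no value
   of M is compatible with all three bounds. *)

From HB Require Import structures.
From mathcomp Require Import all_boot all_order all_algebra all_field.
From mathcomp Require Import spectral sesquilinear.
From mathcomp Require Import lra ring.
Import Order.TTheory GRing.Theory Num.Theory.
Local Open Scope ring_scope.

Section Moments.
Variables (R : realFieldType) (I : finType) (P : pred I).

Lemma sum_sqr_subr (f : I -> R) (c : R) :
  \sum_(i | P i) (f i - c) ^+ 2 =
  \sum_(i | P i) f i ^+ 2 - 2 * c * \sum_(i | P i) f i + #|P|%:R * c ^+ 2.
Proof.
under eq_bigr => i _ do rewrite sqrrB.
rewrite big_split sumrB /= sumr_const sumrMnl -mulr_suml.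
ring.
Qed.

(* The right-hand side of the first inequality on [M] is the value of
   [\sum_(i | P i) (`|x i| - t) ^+ 2] when [\sum_(i | P i) `|x i| = T]. *)
Lemma sum_norm_lt_of_moments (x : I -> R) (t T S Q : R) :
  (0 < #|P|)%N -> 0 <= t ->
  \sum_(i | P i) x i ^+ 2 = S -> Q <= \sum_(i | P i) x i ^+ 4 ->
  (forall M, (M - t) ^+ 2 <= #|P|%:R * t ^+ 2 + S - 2 * t * T ->
     (M + t) ^+ 2 * (#|P|%:R * t ^+ 2 + S - 2 * t * T)
       < Q - 2 * t ^+ 2 * S + #|P|%:R * t ^+ 4) ->
  \sum_(i | P i) `|x i| < T.
Proof.
move=> P0 t0 sum2 sum4 no_M; rewrite ltNge; apply/negP => T_le.
have [j Pj] : exists j, P j by apply/existsP; rewrite -lt0n.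
have [m Pm maxm] := arg_maxP (fun i => `|x i|) Pj.
pose s i : R := `|x i|; pose M := s m.
have s2 i : s i ^+ 2 = x i ^+ 2 by rewrite real_normK ?num_real.
have s4 i : (s i ^+ 2) ^+ 2 = x i ^+ 4 by rewrite s2 -exprM.
have dev_le : \sum_(i | P i) (s i - t) ^+ 2 <= #|P|%:R * t ^+ 2 + S - 2 * t * T.
  rewrite sum_sqr_subr (eq_bigr _ (fun i _ => s2 i)) sum2.
  have : t * T <= t * \sum_(i | P i) s i by rewrite ler_wpM2l.
  lra.
have top_le : (M - t) ^+ 2 <= \sum_(i | P i) (s i - t) ^+ 2.
  by rewrite (bigD1 m) //= lerDl sumr_ge0 // => i _; rewrite sqr_ge0.
have quartic_le : \sum_(i | P i) (s i ^+ 2 - t ^+ 2) ^+ 2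
    <= (M + t) ^+ 2 * \sum_(i | P i) (s i - t) ^+ 2.
  rewrite mulr_sumr; apply: ler_sum => i Pi.
  have siM : s i <= M := maxm i Pi.
  have si0 : 0 <= s i := normr_ge0 _.
  rewrite [s i ^+ 2 - _]subr_sqr exprMn mulrC.
  rewrite ler_wpM2r ?sqr_ge0 // ler_pXn2r ?nnegrE //; lra.
have := no_M M (le_trans top_le dev_le).
apply/negP; rewrite -leNgt.
apply: le_trans (le_trans quartic_le (ler_wpM2l (sqr_ge0 _) dev_le)).
rewrite sum_sqr_subr (eq_bigr _ (fun i _ => s2 i)) (eq_bigr _ (fun i _ => s4 i)).
rewrite sum2 -exprM; lra.
Qed.

End Moments.

Lemma sum_norm_lt_of_4regular_moments {R : realFieldType} {n : nat}
    {r : 'I_n -> R} {i0 : 'I_n} :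
  (n = 20 \/ n = 21)%N -> r i0 = 4 ->
  \sum_i r i ^+ 2 = (4 * n)%:R -> (28 * n)%:R <= \sum_i r i ^+ 4 ->
  \sum_i `|r i| < 2 * (n - 1)%:R.
Proof.
move=> n2021 r_i0 sum2 sum4.
rewrite (bigD1 i0) //= r_i0 in sum2; rewrite (bigD1 i0) //= r_i0 in sum4.
rewrite (bigD1 i0) //= r_i0 ger0_norm // -ltrBrDl.
have card_rest : #|predC1 i0| = (n - 1)%N by rewrite cardC1 card_ord subn1.
apply: (@sum_norm_lt_of_moments _ _ _ _ (17 / 10) _ ((4 * n)%:R - 16)
                                  ((28 * n)%:R - 256)).
- by rewrite card_rest; case: n2021 => ->.
- lra.
- lra.
- lra.
- by rewrite card_rest => M; case: n2021 => ->; rewrite !subn1 /=; nra.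
Qed.

Lemma char_poly_conj (R : fieldType) n (P A : 'M[R]_n) : P \in unitmx ->
  char_poly (invmx P *m A *m P) = char_poly A.
Proof.
move=> Pu; rewrite /char_poly /char_poly_mx !map_mxM map_invmx.
set Q := map_mx polyC P.
have Qu : Q \in unitmx by rewrite map_unitmx.
have -> : 'X%:M - invmx Q *m map_mx polyC A *m Q
    = invmx Q *m ('X%:M - map_mx polyC A) *m Q.
  by rewrite mulmxBr mulmxBl mul_mx_scalar -scalemxAl mulVmx // scalemx1.
by rewrite !det_mulmx mulrC mulrA -det_mulmx mulmxV // det1 mul1r.
Qed.

Lemma expmx_conj (R : comUnitRingType) n (P A : 'M[R]_n) k : P \in unitmx ->
  (invmx P *m A *m P) ^+ k = invmx P *m A ^+ k *m P.
Proof.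
move=> Pu; elim: k => [|k IHk]; first by rewrite !expr0 mulmx1 mulVmx.
by rewrite !exprS IHk -!mulmxE !mulmxA mulmxK.
Qed.

Lemma expmx_diag (R : pzSemiRingType) n (d : 'rV[R]_n) k :
  diag_mx d ^+ k = diag_mx (\row_j d 0 j ^+ k).
Proof.
elim: k => [|k IHk].
  by apply/matrixP => i j; rewrite expr0 !mxE; case: eqP.
rewrite exprS IHk -mulmxE mulmx_diag; congr diag_mx.
by apply/rowP => j; rewrite !mxE exprS.
Qed.

Lemma char_poly_eigenvalues n (A : 'M[algC]_n) :
  char_poly A = \prod_(z <- eigenvalues A) ('X - z%:P).
Proof.
rewrite /eigenvalues; case: closed_field_poly_normal => s /= ->.
by rewrite (monicP (char_poly_monic A)) scale1r.
Qed.

Lemma mem_eigenvalues n (A : 'M[algC]_n) a :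
  (a \in eigenvalues A) = root (char_poly A) a.
Proof. by rewrite char_poly_eigenvalues root_prod_XsubC. Qed.

Section NormalMatrix.
Context {n : nat} {A : 'M[algC]_n}.
Hypothesis A_normal : A \is normalmx.
Local Notation d := (spectral_diag A).

Lemma perm_eigenvalues_spectral :
  perm_eq (eigenvalues A) [seq d 0 i | i <- enum 'I_n].
Proof.
apply: prod_XsubC_eq; rewrite -char_poly_eigenvalues.
rewrite [in LHS](orthomx_spectralP A_normal) char_poly_conj ?spectral_unit //.
rewrite char_poly_trig ?diag_mx_is_trig // big_map big_enum /=.
by apply: eq_bigr => i _; rewrite mxE eqxx mulr1n.
Qed.

Lemma mxtrace_exp_spectral k : \tr (A ^+ k) = \sum_i d 0 i ^+ k.
Proof.
rewrite [in LHS](orthomx_spectralP A_normal) expmx_conj ?spectral_unit //.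
rewrite mxtrace_mulC mulmxA mulmxV ?spectral_unit // mul1mx expmx_diag mxtrace_diag.
by apply: eq_bigr => i _; rewrite mxE.
Qed.

End NormalMatrix.

Definition codeg {n} (e : rel 'I_n) (i j : 'I_n) : nat := \sum_v (e i v && e v j).

Section AdjacencyMatrix.
Context {n : nat} {e : rel 'I_n}.
Hypothesis e_sym : symmetric e.
Local Notation A := (adjmx e).

Lemma adjmx_hermitian : A \is hermsymmx.
Proof.
apply: realsym_hermsym; last by apply/mxOverP => i j; rewrite mxE realn.
by apply/is_hermitianmxP; rewrite expr0 scale1r; apply/matrixP => i j; rewrite !mxE e_sym.
Qed.

Lemma adjmx_normal : A \is normalmx.
Proof. exact/hermitian_normalmx/adjmx_hermitian. Qed.

Lemma adjmx_spectral_real i : spectral_diag A 0 i \is Num.real.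
Proof. exact/mxOverP/hermitian_spectral_diag_real/adjmx_hermitian. Qed.

Lemma energy_spectral : energy e = \sum_i `|spectral_diag A 0 i|.
Proof.
rewrite /energy (perm_big _ (perm_eigenvalues_spectral adjmx_normal)).
by rewrite big_map big_enum.
Qed.

Lemma codeg_sym i j : codeg e i j = codeg e j i.
Proof. by apply: eq_bigr => v _; rewrite andbC !(e_sym v). Qed.

Lemma adjmx_sqrE i j : (A ^+ 2) i j = (codeg e i j)%:R.
Proof.
rewrite expr2 -mulmxE !mxE natr_sum; apply: eq_bigr => v _; rewrite !mxE.
by case: (e i v); case: (e v j); rewrite ?mulr1 ?mulr0.
Qed.

Context {k : nat}.
Hypothesis e_reg : regular k e.

Lemma sum_adj i : (\sum_j e i j = k)%N.
Proof.
rewrite -(e_reg i) cardsE -sum1_card [RHS]big_mkcond /=.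
by apply: eq_bigr => j _; rewrite -topredE /=; case: (e i j).
Qed.

Lemma codeg_diag i : codeg e i i = k.
Proof. by rewrite -(sum_adj i); apply: eq_bigr => v _; rewrite (e_sym v) andbb. Qed.

Lemma sum_codeg i : (\sum_j codeg e i j = k ^ 2)%N.
Proof.
rewrite exchange_big /= (eq_bigr (fun v => (e i v * k)%N)).
  by rewrite -big_distrl /= sum_adj.
move=> v _; rewrite -(sum_adj v) big_distrr /=; apply: eq_bigr => j _.
by case: (e i v); case: (e v j).
Qed.

Lemma sum_codeg_sqr i : (k ^ 2 + (k ^ 2 - k) <= \sum_j codeg e i j ^ 2)%N.
Proof.
have := sum_codeg i; rewrite (bigD1 i) //= codeg_diag => sum_off.
rewrite (bigD1 i) //= codeg_diag leq_add2l -sum_off addKn.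
by apply: leq_sum => j _; case: (codeg e i j) => // c; rewrite expnS leq_pmulr.
Qed.

Lemma mxtrace_adjmx_sqr : \tr (A ^+ 2) = (k * n)%:R.
Proof.
rewrite /mxtrace (eq_bigr (fun _ => k%:R)) => [|i _]; last first.
  by rewrite adjmx_sqrE codeg_diag.
by rewrite sumr_const card_ord natrM mulr_natr.
Qed.

Lemma mxtrace_adjmx_exp4 : ((k ^ 2 + (k ^ 2 - k)) * n)%:R <= \tr (A ^+ 4).
Proof.
rewrite natrM mulr_natr -[n in _ *+ n]card_ord -sumr_const /mxtrace.
apply: ler_sum => i _; rewrite (exprD A 2 2) -mulmxE mxE.
rewrite (eq_bigr (fun j => (codeg e i j ^ 2)%:R)) => [|j _]; last first.
  by rewrite !adjmx_sqrE codeg_sym -natrM mulnn.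
by rewrite -natr_sum ler_nat sum_codeg_sqr.
Qed.

Lemma regular_eigenvalue : (0 < n)%N -> k%:R \in eigenvalues A.
Proof.
move=> n_gt0; rewrite mem_eigenvalues -eigenvalue_root_char.
apply/eigenvalueP; exists (const_mx 1).
  apply/rowP => j; rewrite !mxE (eq_bigr (fun v => (e j v)%:R)) => [|v _].
    by rewrite -natr_sum sum_adj mulr1.
  by rewrite !mxE mul1r e_sym.
by apply/eqP => /rowP /(_ (Ordinal n_gt0)) /eqP; rewrite !mxE oner_eq0.
Qed.

End AdjacencyMatrix.

Theorem theorem3p1 (n : nat) (e : rel 'I_n) :
  (n = 20 \/ n = 21)%N ->
  simple_graph e -> regular 4 e ->
  energy e < 2 * (n - 1)%:R.
Proof.
(* Loops would be harmless: only symmetry and regularity are used. *)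
move=> n2021 [e_sym _] e_reg.
pose r i : algR := in_algR (adjmx_spectral_real e_sym i).
have sum_r k : \tr (adjmx e ^+ k) = algRval (\sum_i r i ^+ k).
  rewrite (mxtrace_exp_spectral (adjmx_normal e_sym)) rmorph_sum.
  by apply: eq_bigr => i _; rewrite rmorphXn.
have [i0 r_i0] : exists i0, r i0 = 4.
  have /(regular_eigenvalue e_sym e_reg) : (0 < n)%N by case: n2021 => ->.
  rewrite (perm_mem (perm_eigenvalues_spectral (adjmx_normal e_sym))).
  by case/mapP => i _ d_i; exists i; apply: val_inj.
have sum2 : \sum_i r i ^+ 2 = (4 * n)%:R.
  by apply: val_inj; rewrite /= -sum_r (mxtrace_adjmx_sqr e_sym e_reg) rmorph_nat.
have sum4 : (28 * n)%:R <= \sum_i r i ^+ 4.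
  rewrite -[_ <= _]/(algRval (28 * n)%:R <= algRval (\sum_i r i ^+ 4)).
  by rewrite -sum_r rmorph_nat (mxtrace_adjmx_exp4 e_sym e_reg).
have := sum_norm_lt_of_4regular_moments n2021 r_i0 sum2 sum4.
rewrite -[_ < _]/(algRval (\sum_i `|r i|) < algRval (2 * (n - 1)%:R)).
by rewrite (energy_spectral e_sym) rmorph_sum rmorphM /= !rmorph_nat.
Qed.
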